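(* Let $T\in B(\mathcal{F})$ be a block-diagonal operator and let $(A_n)_{n\ge0}$ be its sequence of $\mathcal{C}$-approximants. Then for every $n\ge1$, \[\|A_{n+1}-A_n\|=\|T|_{\mathcal{F}_{n+1}}-(T|_{\mathcal{F}_n})\otimes I\|,\] where $(T|_{\mathcal{F}_n})\otimes I$ acts on $\mathcal{F}_{n+1}=\mathcal{F}_n\otimes\mathbb{C}^d$.
   Context: $d\ge2$; $\xi_1,\ldots,\xi_d$ is the standard orthonormal basis of $\mathbb{C}^d$. $\mathcal{F}=\bigoplus_{n\ge0}\mathcal{F}_n$ is the full Fock space, $\mathcal{F}_0=\mathbb{C}\Omega$, $\mathcal{F}_n=(\mathbb{C}^d)^{\otimes n}$ with the usual inner product. $L_j\eta=\xi_j\otimes\eta$ (and $L_j\Omega=\xi_j$) are the left creation operators. $T$ is block-diagonal if $T(\mathcal{F}_n)\subseteq\mathcal{F}_n$ for all $n$. The $\mathcal{C}$-approximants of $T$ are defined recursively by $A_0=\langle T\Omega,\Omega\rangle I_{\mathcal{F}}$ and, for $n\ge0$, $A_{n+1}=A_n+\sum c_{i_1,\ldots,i_{n+1};j_1,\ldots,j_{n+1}}(L_{i_1}\cdots L_{i_{n+1}})(L_{j_1}\cdots L_{j_{n+1}})^*$, the sum over all $1\le i_1,\ldots,i_{n+1},j_1,\ldots,j_{n+1}\le d$, with $c_{i_1,\ldots,i_{n+1};j_1,\ldots,j_{n+1}}=\langle T(\xi_{j_1}\otimes\cdots\otimes\xi_{j_{n+1}}),\xi_{i_1}\otimes\cdots\otimes\xi_{i_{n+1}}\rangle-\delta_{i_{n+1},j_{n+1}}\langle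 T(\xi_{j_1}\otimes\cdots\otimes\xi_{j_n}),\xi_{i_1}\otimes\cdots\otimes\xi_{i_n}\rangle$ (for $n=0$ the second inner product is $\langle T\Omega,\Omega\rangle$). *)

From HB Require Import structures.
From mathcomp Require Import all_boot all_order all_algebra.
From mathcomp Require Import all_classical all_reals.
From mathcomp Require Import ereal esum.
From mathcomp Require Import complex.

Set Implicit Arguments.
Unset Strict Implicit.
Unset Printing Implicit Defensive.

Import Order.TTheory GRing.Theory Num.Theory.
Local Open Scope ring_scope.
Local Open Scope classical_set_scope.

(* Full Fock space over C^d, realised as l^2 over words in the alphabet 'I_d:
   the word [:: i1; ...; in] indexes the basis vector xi_{i1} (x) ... (x) xi_{in},
   the empty word indexes the vacuum Omega. *)
Section Fock.
Variables (R : realType) (d : nat).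

Definition word := seq 'I_d.
Definition vec := word -> R[i].

Definition l2sq (x : vec) : \bar R :=
  (\esum_(w in [set: word]) ((Normc.normc (x w)) ^+ 2)%:E)%E.

Definition inF (x : vec) : Prop := (l2sq x < +oo)%E.

Definition l2norm (x : vec) : R := Num.sqrt (fine (l2sq x)).

Definition inFn (n : nat) (x : vec) : Prop := forall w : word, size w != n -> x w = 0.

Definition basis (w : word) : vec := fun u => if u == w then 1 else 0.

Definition bounded_op (T : vec -> vec) : Prop :=
  [/\ forall x, inF x -> inF (T x),
      forall (a : R[i]) (x y : vec), inF x -> inF y ->
        T (fun w => a * x w + y w) = (fun w => a * T x w + T y w)
    & exists M : R, forall x, inF x -> l2norm (T x) <= M * l2norm x].

Definition block_diagonal (T : vec -> vec) : Prop :=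
  forall (n : nat) (x : vec), inF x -> inFn n x -> inFn n (T x).

Definition opnorm (P : set vec) (S : vec -> vec) : \bar R :=
  ereal_sup [set (l2norm (S x))%:E | x in [set x | P x /\ l2norm x <= 1]].

(* left creation operators L_j (L_j eta = xi_j (x) eta) and their adjoints *)
Definition Lop (j : 'I_d) (x : vec) : vec :=
  fun w => match w with
           | j' :: w' => if j' == j then x w' else 0
           | [::] => 0
           end.
Definition Ladj (j : 'I_d) (x : vec) : vec := fun w => x (j :: w).

Definition Lword (s : word) : vec -> vec := foldr (fun j f => Lop j \o f) id s.
Definition Lword_adj (s : word) : vec -> vec := foldr (fun j f => f \o Ladj j) id s.

Definition coef (T : vec -> vec) (n : nat) (I J : n.+1.-tuple 'I_d) : R[i] :=
  T (basis J) I
  - (if tnth I ord_max == tnth J ord_max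
     then T (basis (take n J)) (take n I) else 0).

Fixpoint approx (T : vec -> vec) (n : nat) : vec -> vec :=
  match n with
  | 0 => fun x w => T (basis [::]) [::] * x w
  | m.+1 => fun x w =>
      approx T m x w
      + \sum_(I : m.+1.-tuple 'I_d) \sum_(J : m.+1.-tuple 'I_d)
          coef T I J * Lword I (Lword_adj J x) w
  end.

(* S (x) I on F_{n+1} = F_n (x) C^d, for S acting on F_n, with
   xi_u (x) xi_j identified with xi_{rcons u j} *)
Definition slice (n : nat) (x : vec) (j : 'I_d) : vec :=
  fun w => if size w == n then x (rcons w j) else 0.

Definition tensorI (n : nat) (S : vec -> vec) (x : vec) : vec :=
  fun u => match rev u with
           | j :: r => if size u == n.+1 then S (slice n x j) (rev r) else 0
           | [::] => 0
           end.

End Fock.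

(* The increment D := A_{n+1} - A_n = sum_{|I|=|J|=n+1} c_{I;J} L_I L_J^* vanishes on
   words of length at most n and only acts on the first n+1 letters of longer words:
   (D x)(J u) = (D x_u)(J) with x_u(v) = x(v u) supported on F_{n+1}.  Hence
   ||D x||^2 = sum_u ||D x_u||^2 <= ||D|F_{n+1}||^2 sum_u ||x_u||^2 <= ||D|F_{n+1}||^2 ||x||^2,
   so ||D|| = ||D|F_{n+1}||.  On F_{n+1} the subtracted term of c_{I;J} is exactly the
   matrix of (T|F_n) (x) I, so D agrees there with T - (T|F_n) (x) I. *)

From Pilot Require Import Defs.
From HB Require Import structures.
From mathcomp Require Import all_boot all_order all_algebra.
From mathcomp Require Import all_classical all_reals.
From mathcomp Require Import ereal esum.
From mathcomp Require Import complex.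
Import Order.TTheory GRing.Theory Num.Theory.
Local Open Scope ring_scope.
Local Open Scope classical_set_scope.

Set Implicit Arguments.
Unset Strict Implicit.
Unset Printing Implicit Defensive.

Lemma esum_finType (R : realType) (T : finType) (f : T -> \bar R) :
  (forall i, 0 <= f i)%E -> \esum_(i in [set: T]) f i = (\sum_(i : T) f i)%E.
Proof.
move=> f0; rewrite esum_fset ?finite_finset //.
rewrite (fsbigE (enum T)) ?enum_uniq //.
- by under eq_bigl do rewrite in_setT; rewrite big_enum.
- by move=> i _; rewrite mem_enum.
- exact: finite_finset.
Qed.

Lemma esumZ_le (R : realType) (T : choiceType) (P : set T) (c : R) (f : T -> \bar R) :
  0 <= c -> (forall i, 0 <= f i)%E ->
  (\esum_(i in P) (c%:E * f i) <= c%:E * \esum_(i in P) f i)%E.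
Proof.
move=> c0 f0; apply: ge_ereal_sup => _ [X hX <-].
rewrite -ge0_mule_fsumr //; apply: lee_wpmul2l; first by rewrite lee_fin.
by apply: ereal_sup_ubound; exists X.
Qed.

Section FockSpace.
Variables (R : realType) (d : nat).
Local Notation vec := (vec R d).
Local Notation word := (word d).
Local Notation tuple n := (n.-tuple 'I_d).

Definition sqnormc (z : R[i]) : R := Normc.normc z ^+ 2.

Lemma sqnormc_ge0 z : 0 <= sqnormc z. Proof. exact: sqr_ge0. Qed.

Lemma sqnormc0 : sqnormc 0 = 0.
Proof. by rewrite /sqnormc Normc.normc0 expr0n. Qed.

Lemma sqnormcM a z : sqnormc (a * z) = sqnormc a * sqnormc z.
Proof. by rewrite /sqnormc Normc.normcM exprMn. Qed.

Lemma sqnormc_eq0 z : sqnormc z = 0 -> z = 0.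
Proof. by move/eqP; rewrite expf_eq0 /= => /eqP /Normc.eq0_normc. Qed.

Lemma l2sq_ge0 (x : vec) : (0 <= l2sq x)%E.
Proof. by apply: esum_ge0 => w _; rewrite lee_fin sqnormc_ge0. Qed.

Lemma basis_inFn m (J : tuple m) : inFn m (Defs.basis R J).
Proof.
move=> w hw; rewrite /Defs.basis; case: eqP => [e|//].
by move: hw; rewrite e size_tuple eqxx.
Qed.

Lemma inFn_expand m (x : vec) : inFn m x ->
  x = fun w => \sum_(J : tuple m) x J * Defs.basis R J w.
Proof.
move=> hx; apply: funext => w; rewrite /Defs.basis.
have [hw|hw] := boolP (size w == m); last first.
  rewrite hx // big1 // => J _; case: eqP => [e|_]; last by rewrite mulr0.
  by move: hw; rewrite e size_tuple eqxx.
rewrite (bigD1 (Tuple hw)) //= eqxx mulr1 big1 ?addr0 // => J hJ.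
case: eqP => [e|_]; last by rewrite mulr0.
by move/eqP: hJ; case; apply: val_inj; rewrite /= e.
Qed.

Lemma l2sq_inFn m (x : vec) : inFn m x ->
  l2sq x = (\sum_(J : tuple m) sqnormc (x J))%:E.
Proof.
move=> hx; rewrite /l2sq.
have -> : \esum_(w in [set: word]) (sqnormc (x w))%:E
    = \esum_(w in [set w : word | size w = m]) (sqnormc (x w))%:E.
  rewrite [RHS]esum_mkcond; apply: eq_esum => w _.
  case: (boolP (w \in _)) => // /negP; rewrite inE /= => hw.
  by rewrite hx ?sqnormc0 //; apply/eqP.
have -> : [set w : word | size w = m] = (@tval m 'I_d) @` [set: tuple m].
  apply/seteqP; split => w /=; first by move=> /eqP hw; exists (Tuple hw).
  by case=> J _ <-; rewrite size_tuple.
rewrite esum_image; last by move=> a b _ _; apply: val_inj.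
by rewrite esum_finType ?sumEFin // => J; rewrite lee_fin sqnormc_ge0.
Qed.

Lemma l2norm_inFn m (x : vec) : inFn m x ->
  l2norm x = Num.sqrt (\sum_(J : tuple m) sqnormc (x J)).
Proof. by move=> hx; rewrite /l2norm (l2sq_inFn hx). Qed.

Lemma inFn_inF m (x : vec) : inFn m x -> inF x.
Proof. by move=> hx; rewrite /inF (l2sq_inFn hx) ltry. Qed.

Lemma l2normZ_inFn m (a : R[i]) (x : vec) : inFn m x ->
  l2norm (fun w => a * x w) = Normc.normc a * l2norm x.
Proof.
move=> hx; have hax : inFn m (fun w => a * x w) by move=> w hw; rewrite hx ?mulr0.
rewrite (l2norm_inFn hx) (l2norm_inFn hax).
under eq_bigr do rewrite sqnormcM.
rewrite -mulr_sumr sqrtrM ?sqnormc_ge0 // sqrtr_sqr ger0_norm //.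
by case: {hax} a => ? ?; exact: sqrtr_ge0.
Qed.

Lemma l2norm_eq0_inFn m (x : vec) : inFn m x -> l2norm x = 0 -> forall w, x w = 0.
Proof.
move=> hx; rewrite (l2norm_inFn hx) => /eqP; rewrite sqrtr_eq0 => hle w.
have [hw|] := boolP (size w == m); last exact: hx.
have sq0 (J : tuple m) : 0 <= sqnormc (x J) by exact: sqnormc_ge0.
have hsum : \sum_(J : tuple m) sqnormc (x J) = 0.
  by apply/eqP; rewrite eq_le hle sumr_ge0.
by apply: sqnormc_eq0; exact: (psumr_eq0P (fun J _ => sq0 J) hsum (i := Tuple hw)).
Qed.

Lemma l2norm_le_l2sq (s : R) (x y : vec) : 0 <= s -> inF x ->
  (l2sq y <= (s ^+ 2)%:E * l2sq x)%E -> l2norm y <= s * l2norm x.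
Proof.
rewrite /inF /l2norm => s0; have := l2sq_ge0 x.
case: (l2sq x) => [r| |] //; rewrite lee_fin => r0 _; rewrite -EFinM.
have := l2sq_ge0 y; case: (l2sq y) => [t| |] //= _; rewrite ?leye_eq // lee_fin => hts.
by rewrite -(ger0_norm s0) -sqrtr_sqr -sqrtrM ?sqr_ge0 // ler_sqrt // mulr_ge0 ?sqr_ge0.
Qed.

Lemma esum_size_geq N (f : word -> \bar R) : (forall w, 0 <= f w)%E ->
  \esum_(w in [set w : word | (N <= size w)%N]) f w =
  \esum_(u in [set: word]) (\sum_(J : tuple N) f (J ++ u))%E.
Proof.
move=> f0.
under [RHS]eq_esum => u _ do
  rewrite -(esum_finType (f := fun J : tuple N => f (J ++ u)) (fun J => f0 _)).
rewrite esum_esum // -(esum_image _ (fun k : word * tuple N => tval k.2 ++ k.1) f).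
  congr esum; apply/seteqP; split.
    move=> w /= hw; have ht : size (take N w) == N by rewrite size_takel.
    by exists (drop N w, Tuple ht) => //=; rewrite cat_take_drop.
  by move=> _ [[u J] _ <-] /=; rewrite size_cat size_tuple leq_addr.
move=> [u1 J1] [u2 J2] _ _ /= e.
have := eqseq_cat u1 u2 (s1 := J1) (s2 := J2).
rewrite !size_tuple e eqxx => /(_ erefl) /esym /andP[/eqP eJ /eqP ->].
by congr pair; apply: val_inj.
Qed.

Lemma opnorm_mono (P Q : set vec) (S : vec -> vec) :
  P `<=` Q -> (opnorm P S <= opnorm Q S)%E.
Proof.
move=> PQ; apply: ge_ereal_sup => _ [x [hP h1] <-].
by apply: ereal_sup_ubound; exists x => //; split => //; exact: PQ.
Qed.

Lemma eq_opnorm (P : set vec) (S1 S2 : vec -> vec) :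
  (forall x, P x -> S1 x = S2 x) -> opnorm P S1 = opnorm P S2.
Proof.
move=> h; rewrite /opnorm; congr ereal_sup; apply/seteqP.
by split => _ [x [hP h1] <-]; exists x => //; rewrite h.
Qed.

Lemma opnorm_ge0 (P : set vec) (S : vec -> vec) : P (fun _ => 0) -> (0 <= opnorm P S)%E.
Proof.
move=> P0; apply: le_trans (_ : (l2norm (S (fun _ => 0)))%:E <= _)%E.
  by rewrite lee_fin sqrtr_ge0.
apply: ereal_sup_ubound; exists (fun _ => 0) => //; split => //.
by rewrite (l2norm_inFn (m := 0%N)) // big1 ?sqrtr0 // => J _; rewrite sqnormc0.
Qed.

Lemma opnorm_inFn_le m (S : vec -> vec) (s : R) :
  (forall a y, S (fun w => a * y w) = fun w => a * S y w) ->
  (forall y, inFn m y -> inFn m (S y)) ->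
  opnorm (@inFn R d m) S = s%:E ->
  forall y, inFn m y -> l2norm (S y) <= s * l2norm y.
Proof.
move=> SZ Sm hs y hy.
have [y0|ny0] := eqVneq (l2norm y) 0.
  have -> : y = fun w => 0 * y w.
    by apply: funext => w; rewrite mul0r (l2norm_eq0_inFn hy y0).
  rewrite SZ (l2normZ_inFn _ (Sm _ hy)) (l2normZ_inFn _ hy) Normc.normc0.
  by rewrite !mul0r mulr0.
have c0 : 0 < l2norm y by rewrite lt_def ny0 sqrtr_ge0.
set a : R[i] := Complex (l2norm y)^-1 0.
have na : Normc.normc a = (l2norm y)^-1.
  by rewrite /Normc.normc /= expr0n addr0 sqrtr_sqr ger0_norm // invr_ge0 ltW.
have hay : inFn m (fun w => a * y w) by move=> w hw; rewrite hy ?mulr0.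
have : ((l2norm (S (fun w => a * y w)))%:E <= s%:E)%E.
  rewrite -hs; apply: ereal_sup_ubound; exists (fun w => a * y w) => //; split => //.
  by rewrite (l2normZ_inFn _ hy) na mulVf.
rewrite lee_fin SZ (l2normZ_inFn _ (Sm _ hy)) na.
by rewrite ler_pdivrMl // mulrC.
Qed.

Lemma sum_sqnormc_le m (s : R) (x y : vec) : inFn m x -> inFn m y ->
  l2norm y <= s * l2norm x ->
  \sum_(J : tuple m) sqnormc (y J) <= s ^+ 2 * \sum_(J : tuple m) sqnormc (x J).
Proof.
move=> hx hy; rewrite (l2norm_inFn hx) (l2norm_inFn hy) => h.
have sx0 : 0 <= \sum_(J : tuple m) sqnormc (x J) by apply: sumr_ge0 => J _; exact: sqnormc_ge0.
have sy0 : 0 <= \sum_(J : tuple m) sqnormc (y J) by apply: sumr_ge0 => J _; exact: sqnormc_ge0.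
rewrite -(sqr_sqrtr sx0) -exprMn -(sqr_sqrtr sy0) ler_sqr // ?nnegrE ?sqrtr_ge0 //.
exact: le_trans (sqrtr_ge0 _) h.
Qed.

Lemma Lword_adjE (J u : word) (x : vec) : Lword_adj J x u = x (J ++ u).
Proof. by elim: J x => [//|j J IH] x /=; rewrite IH. Qed.

Lemma LwordE (I w : word) (y : vec) :
  Lword I y w = if take (size I) w == I then y (drop (size I) w) else 0.
Proof.
elim: I w => [|i I IH] [|j w] //=; rewrite ?take0 ?drop0 // /Lop IH eqseq_cons.
by case: (j == i).
Qed.

Definition approx_incr (T : vec -> vec) (n : nat) (x : vec) : vec := fun w =>
  \sum_(I : tuple n.+1) \sum_(J : tuple n.+1) coef T I J * Lword I (Lword_adj J x) w.

Lemma approx_succE T n x w : approx T n.+1 x w - approx T n x w = approx_incr T n x w.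
Proof. by rewrite /= addrC addKr. Qed.

Lemma approx_incrE T n x w : approx_incr T n x w =
  \sum_(I : tuple n.+1) if take n.+1 w == I then
     \sum_(J : tuple n.+1) coef T I J * x (J ++ drop n.+1 w) else 0.
Proof.
apply: eq_bigr => I _; under eq_bigr do rewrite LwordE size_tuple Lword_adjE.
by case: ifP => // _; rewrite big1 // => J _; rewrite mulr0.
Qed.

Lemma approx_incrZ T n (a : R[i]) x :
  approx_incr T n (fun v => a * x v) = fun w => a * approx_incr T n x w.
Proof.
apply: funext => w; rewrite !approx_incrE mulr_sumr; apply: eq_bigr => I _.
case: ifP => _; last by rewrite mulr0.
by rewrite mulr_sumr; apply: eq_bigr => J _; rewrite mulrCA.
Qed.

Lemma approx_incr_short T n x w : (size w <= n)%N -> approx_incr T n x w = 0.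
Proof.
move=> hw; rewrite approx_incrE big1 // => I _.
rewrite take_oversize ?(leq_trans hw) //; case: eqP => // e.
by move: hw; rewrite e size_tuple ltnn.
Qed.

Lemma approx_incr_inFn T n x : inFn n.+1 x -> inFn n.+1 (approx_incr T n x).
Proof.
move=> hx w hw; have [short|long] := leqP (size w) n; first exact: approx_incr_short.
rewrite approx_incrE big1 // => I _; case: ifP => // _.
rewrite big1 // => J _; rewrite hx ?mulr0 // size_cat size_tuple size_drop.
by rewrite subnKC // eq_sym.
Qed.

Definition suffix_block (n : nat) (x : vec) (u : word) : vec :=
  fun v => if size v == n.+1 then x (v ++ u) else 0.

Lemma suffix_block_inFn n x u : inFn n.+1 (suffix_block n x u).
Proof. by move=> w /negPf hw; rewrite /suffix_block hw. Qed.

Lemma approx_incr_cat T n x u (J : tuple n.+1) :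
  approx_incr T n x (J ++ u) = approx_incr T n (suffix_block n x u) J.
Proof.
rewrite !approx_incrE; apply: eq_bigr => I _.
rewrite take_size_cat ?size_tuple // drop_size_cat ?size_tuple //.
rewrite take_oversize ?size_tuple // drop_oversize ?size_tuple //.
case: ifP => // _; apply: eq_bigr => K _.
by rewrite /suffix_block cats0 size_tuple eqxx.
Qed.

Lemma l2sq_approx_incr_le T n (s : R) :
  (forall y, inFn n.+1 y -> l2norm (approx_incr T n y) <= s * l2norm y) ->
  forall x, (l2sq (approx_incr T n x) <= (s ^+ 2)%:E * l2sq x)%E.
Proof.
move=> hs x; pose f (y : vec) (w : word) := (sqnormc (y w))%:E.
have f0 (y : vec) (w : word) : (0 <= f y w)%E by rewrite lee_fin sqnormc_ge0.
have -> : l2sq (approx_incr T n x) =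
    \esum_(w in [set w : word | (n.+1 <= size w)%N]) f (approx_incr T n x) w.
  rewrite [RHS]esum_mkcond; apply: eq_esum => w _; case: ifPn => [//|/negP].
  rewrite inE /= => /negP; rewrite -leqNgt => /approx_incr_short ->.
  by rewrite -/(sqnormc 0) sqnormc0.
rewrite esum_size_geq //.
under eq_esum do under eq_bigr do rewrite /f approx_incr_cat.
apply: le_trans (_ : \esum_(u in [set: word])
    ((s ^+ 2)%:E * \sum_(J : tuple n.+1) f x (J ++ u)) <= _)%E.
  apply: le_esum => u _; rewrite !sumEFin -EFinM lee_fin.
  have := sum_sqnormc_le (@suffix_block_inFn n x u)
    (approx_incr_inFn T (@suffix_block_inFn n x u)) (hs _ (@suffix_block_inFn n x u)).
  by under [X in _ <= _ * X -> _]eq_bigr do rewrite /suffix_block size_tuple eqxx.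
apply: le_trans (esumZ_le _ (sqr_ge0 s) _) _ => [u|].
  by apply: sume_ge0 => J _; exact: f0.
rewrite -esum_size_geq //; apply: lee_wpmul2l; first by rewrite lee_fin sqr_ge0.
rewrite [leLHS]esum_mkcond; apply: le_esum => w _.
by case: ifP => _; [exact: lexx | exact: f0].
Qed.

Lemma size_take_init n (J : tuple n.+1) : size (take n J) == n.
Proof. by rewrite size_take size_tuple ltnSn. Qed.

Definition init_tuple n (J : tuple n.+1) : tuple n := Tuple (size_take_init J).

Lemma tnth_rcons_max n (K : tuple n) k : tnth [tuple of rcons K k] ord_max = k.
Proof. by rewrite (tnth_nth k) /= nth_rcons size_tuple ltnn eqxx. Qed.

Lemma take_rcons_tuple n (K : tuple n) k : take n (rcons K k) = K.
Proof. by rewrite -cats1 take_size_cat // size_tuple. Qed.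

Lemma big_tuple_rcons n (F : tuple n.+1 -> R[i]) :
  \sum_(J : tuple n.+1) F J = \sum_(K : tuple n) \sum_(k : 'I_d) F [tuple of rcons K k].
Proof.
rewrite pair_big /= (reindex (fun p : tuple n * 'I_d => [tuple of rcons p.1 p.2])) //=.
exists (fun J => (init_tuple J, tnth J ord_max)) => [[K k] _ | J _].
  by congr pair; [apply: val_inj; rewrite /= take_rcons_tuple | exact: tnth_rcons_max].
apply: val_inj => /=; rewrite (tnth_nth (thead J)) /= -take_nth ?size_tuple //.
by rewrite take_oversize // size_tuple.
Qed.

Lemma tensorI_rcons n S (x : vec) r j : size r = n ->
  tensorI n S x (rcons r j) = S (slice n x j) r.
Proof. by move=> hr; rewrite /tensorI rev_rcons revK size_rcons hr eqxx. Qed.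

Lemma tensorI_out n S (x : vec) u : size u != n.+1 -> tensorI n S x u = 0.
Proof. by rewrite /tensorI; case: (rev u) => [//|j r] /negPf ->. Qed.

Lemma slice_inFn n (x : vec) j : inFn n (slice n x j).
Proof. by move=> w /negPf hw; rewrite /slice hw. Qed.

Lemma coef_rcons T n r j (hw : size (rcons r j) == n.+1) (J : tuple n.+1) :
  coef T (Tuple hw) J = T (Defs.basis R J) (rcons r j)
    - (if j == tnth J ord_max then T (Defs.basis R (take n J)) r else 0).
Proof.
have hr : size r = n by move: hw; rewrite size_rcons eqSS => /eqP.
rewrite /coef (tnth_nth j) /= nth_rcons hr ltnn eqxx.
by rewrite -cats1 take_size_cat.
Qed.

Section LinearOperator.
Variable T : vec -> vec.
Hypothesis T_linear : forall (a : R[i]) (x y : vec), inF x -> inF y ->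
  T (fun w => a * x w + y w) = (fun w => a * T x w + T y w).

Lemma linear_op0 : T (fun _ => 0) = fun _ => 0.
Proof.
have h0 : inF (fun _ : word => 0 : R[i]) by apply: (@inFn_inF 0%N).
have := T_linear (-1) h0 h0.
have -> : (fun _ : word => -1 * 0 + 0 : R[i]) = (fun _ => 0).
  by apply: funext => w; rewrite mulr0 addr0.
by move=> ->; apply: funext => w; rewrite mulN1r addNr.
Qed.

Lemma linear_op_sum m (K : Type) (r : seq K) (a : K -> R[i]) (v : K -> vec) :
  (forall k, inFn m (v k)) ->
  T (fun w => \sum_(k <- r) a k * v k w) = fun w => \sum_(k <- r) a k * T (v k) w.
Proof.
move=> hv; elim: r => [|k r IH].
  under eq_fun do rewrite big_nil.
  by rewrite linear_op0; under [RHS]eq_fun do rewrite big_nil.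
have hr : inFn m (fun w => \sum_(k <- r) a k * v k w).
  by move=> w hw; rewrite big1 // => k0 _; rewrite hv ?mulr0.
under eq_fun do rewrite big_cons.
rewrite T_linear; [|exact: inFn_inF (hv k)|exact: inFn_inF hr].
by apply: funext => w; rewrite big_cons IH.
Qed.

Lemma linear_op_expand m (x : vec) : inFn m x ->
  T x = fun w => \sum_(J : tuple m) x J * T (Defs.basis R J) w.
Proof.
move=> hx; rewrite {1}(inFn_expand hx).
exact: (linear_op_sum _ _ (fun J : tuple m => @basis_inFn m J)).
Qed.

Lemma linear_op_tensorI n (x : vec) r j : inFn n.+1 x -> size r = n ->
  tensorI n T x (rcons r j) = \sum_(J : tuple n.+1)
    (if j == tnth J ord_max then T (Defs.basis R (take n J)) r else 0) * x J.
Proof.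
move=> hx hr; rewrite tensorI_rcons // (linear_op_expand (@slice_inFn n x j)).
rewrite big_tuple_rcons; apply: eq_bigr => K _.
rewrite (bigD1 j) //= big1 => [|k hk]; last first.
  by rewrite tnth_rcons_max eq_sym (negPf hk) mul0r.
by rewrite tnth_rcons_max eqxx take_rcons_tuple /slice size_tuple eqxx mulrC addr0.
Qed.

Hypothesis T_block : block_diagonal T.

Lemma sub_tensorI_approx_incr n (x : vec) w : inFn n.+1 x ->
  T x w - tensorI n T x w = approx_incr T n x w.
Proof.
move=> hx; have [hw|hw] := boolP (size w == n.+1); last first.
  by rewrite (T_block (inFn_inF hx) hx hw) tensorI_out // (approx_incr_inFn T hx hw) subr0.
case/lastP: w hw => [//|r j] hw.
have hr : size r = n by move: hw; rewrite size_rcons eqSS => /eqP.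
rewrite approx_incrE (bigD1 (Tuple hw)) //= [X in _ = _ + X]big1 => [|I hI]; last first.
  rewrite take_oversize ?(eqP hw) //; case: eqP => // e.
  by move/eqP: hI; case; apply: val_inj.
rewrite addr0 take_oversize ?(eqP hw) // eqxx drop_oversize ?(eqP hw) //.
under eq_bigr do rewrite coef_rcons cats0.
rewrite (linear_op_expand hx) linear_op_tensorI // -sumrB.
by apply: eq_bigr => J _; rewrite mulrBl mulrC.
Qed.

End LinearOperator.

End FockSpace.

Theorem lemma3p3 (R : realType) (d : nat) (hd : (2 <= d)%N)
  (T : vec R d -> vec R d) (hT : bounded_op T) (hbd : block_diagonal T)
  (n : nat) (hn : (1 <= n)%N) :
  opnorm (@inF R d) (fun x w => approx T n.+1 x w - approx T n x w)
  = opnorm (@inFn R d n.+1) (fun x w => T x w - tensorI n T x w).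
Proof.
case: hT => _ T_linear _.
have -> : (fun x w => approx T n.+1 x w - approx T n x w) = approx_incr T n.
  by apply: funext => x; apply: funext => w; exact: approx_succE.
rewrite (@eq_opnorm R d _ _ (approx_incr T n)); last first.
  by move=> x hx; apply: funext => w; exact: sub_tensorI_approx_incr.
apply: le_anti; rewrite [X in _ && X]opnorm_mono ?andbT => [|x]; last exact: inFn_inF.
have := @opnorm_ge0 R d (@inFn R d n.+1) (approx_incr T n) (fun _ _ => erefl).
case E: (opnorm (@inFn R d n.+1) _) => [s| |] // s0; last by rewrite leey.
have {}s0 : 0 <= s by rewrite -lee_fin.
have hs := opnorm_inFn_le (approx_incrZ T n) (@approx_incr_inFn R d T n) E.
apply: ge_ereal_sup => _ [x [hx hx1] <-]; rewrite lee_fin.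
apply: le_trans (l2norm_le_l2sq s0 hx (l2sq_approx_incr_le hs x)) _.
by rewrite -[leRHS]mulr1 ler_wpM2l.
Qed.
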